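(* Let $4\le p\le n-1$ and let $j\in\{1,\dots,n-1\}$ be an internal node. The degree constraint $x(\delta^+(j))\le 1$ is valid for $P^p_{0,n}(D)$ and defines a facet of $P^p_{0,n}(D)$.
   Context: Let $n$ be a positive integer, $V=\{0,1,\dots,n\}$, and let $D=(V,A)$ be the digraph whose arc set $A$ consists of all ordered pairs $(i,j)$ with $i\neq j$, $i,j\in V$, except that no arc enters node $0$, no arc leaves node $n$, and the arc $(0,n)$ is absent. Nodes $1,\dots,n-1$ are internal nodes. A $(0,n)$-$p$-path is a simple directed path in $D$ from $0$ to $n$ with exactly $p$ arcs. $P^p_{0,n}(D)\subseteq\mathbb{R}^A$ is the convex hull of the incidence vectors of all $(0,n)$-$p$-paths. For $F\subseteq A$, $x(F)=\sum_{(i,j)\in F}x_{ij}$; $\delta^+(k)$ ($\delta^-(k)$) is the set of arcs of $A$ leaving (entering) node $k$. Facet defining means valid and defining a face of dimension $\dim P^p_{0,n}(D)-1$. *)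

From mathcomp Require Import all_boot all_order all_algebra.

Import Order.TTheory GRing.Theory Num.Theory.
Local Open Scope ring_scope.

(* Nodes V = {0,...,n} are 'I_n.+1; node 0 is ord0, node n is ord_max. *)
Notation node n := (ordinal n.+1).

Definition is_arc (n : nat) (e : node n * node n) : bool :=
  [&& e.1 != e.2, e.2 != ord0, e.1 != ord_max & e != (ord0, ord_max)].

Definition arc (n : nat) := {e : 'I_n.+1 * 'I_n.+1 | is_arc n e}.

Notation vecA R n := {ffun arc n -> R}.

Definition is_pn_path (n p : nat) (s : seq (node n)) : bool :=
  [&& size s == p.+1, head ord0 s == ord0, last ord0 s == ord_max, uniq s &
      path (fun i j => is_arc n (i, j)) (head ord0 s) (behead s)].

Definition incid (R : realFieldType) (n : nat) (s : seq (node n)) : vecA R n :=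
  [ffun e : arc n => if val e \in zip s (behead s) then 1 else 0].

Definition in_Pp (R : realFieldType) (n p : nat) (x : vecA R n) : Prop :=
  exists l : seq (R * seq (node n)),
    [/\ all (fun c => 0 <= c.1) l,
        \sum_(c <- l) c.1 = 1,
        all (fun c => is_pn_path n p c.2) l &
        forall e, x e = \sum_(c <- l) c.1 * incid R n c.2 e].

Definition x_out (R : realFieldType) (n : nat) (x : vecA R n) (k : node n) : R :=
  \sum_(e : arc n | (val e).1 == k) x e.

Definition aff_indep (R : realFieldType) (n k : nat) (y : 'I_k.+1 -> vecA R n) : Prop :=
  forall c : 'I_k.+1 -> R,
    \sum_i c i = 0 -> (forall e, \sum_i c i * y i e = 0) -> forall i, c i = 0.

Definition has_dim (R : realFieldType) (n : nat) (S : vecA R n -> Prop) (d : nat) : Prop :=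
  (exists y : 'I_d.+1 -> vecA R n, (forall i, S (y i)) /\ aff_indep R n d y) /\
  (forall y : 'I_d.+2 -> vecA R n, (forall i, S (y i)) -> ~ aff_indep R n d.+1 y).

From Pilot Require Import Defs.
From mathcomp Require Import all_boot all_order all_algebra.
From mathcomp Require Import ring lra zify.
From Stdlib Require Import Classical.
Import Order.TTheory GRing.Theory Num.Theory.
Local Open Scope ring_scope.
Set Implicit Arguments. Unset Strict Implicit. Unset Printing Implicit Defensive.

(* Validity: a simple path leaves the internal node [j] at most once.
   Facet: let [F] be the face [x(δ+(j)) = 1] and [z] a path avoiding [j]. A maximal
   affinely independent family in [F], extended by [z], spans [P] as soon as every
   linear functional that is constant on the paths through [j] is also constant on
   the paths avoiding [j]; then [dim P = dim F + 1]. Such a functional is a sum of arc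
   weights along the path. Two sequences of internal nodes avoiding [j] are connected
   by replacing one entry or swapping two adjacent ones, and a move changes the weight
   exactly as it does after an entry at distance at least two from the move has been
   replaced by [j], which yields paths through [j]. When [p = 4, 5] such an entry may
   not exist and the remaining moves are linear consequences of the equalities between
   paths through [j]. *)

Ltac split_facts := repeat match goal with
 | H : is_true (_ && _) |- _ => case/andP: H => ? ?
 | H : is_true (~~ (_ || _)) |- _ => rewrite negb_or in H
 end.

Ltac decide_facts := repeat first
  [ done | rewrite eq_sym; done | apply/andP; split | rewrite negb_or ].

Lemma perm_swap2 (T : eqType) (L : seq T) a b Rr :
  perm_eq (L ++ a :: b :: Rr) (L ++ b :: a :: Rr).
Proof. by rewrite perm_cat2l (perm_catCA [:: a] [:: b]). Qed.

Section RouteWeight.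

Variables (T : eqType) (R : realFieldType) (f : T -> T -> R) (z0 zn : T).

Fixpoint walk_wt (x : T) (s : seq T) : R :=
  if s is y :: s' then f x y + walk_wt y s' else 0.

Definition route_wt (mid : seq T) : R := walk_wt z0 (rcons mid zn).

Lemma walk_wt_cat x s1 s2 :
  walk_wt x (s1 ++ s2) = walk_wt x s1 + walk_wt (last x s1) s2.
Proof. by elim: s1 x => [|y s1 IH] x /=; rewrite ?add0r ?IH ?addrA. Qed.

Lemma route_wt_cat s1 s2 :
  route_wt (s1 ++ s2) = walk_wt z0 s1 + walk_wt (last z0 s1) (rcons s2 zn).
Proof. by rewrite /route_wt rcons_cat walk_wt_cat. Qed.

(* The entry [c] only contributes [f _ c + f c d], which both differences cancel. *)
Lemma route_wt_subB_left L c d X Y (v : T) :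
  route_wt (L ++ c :: d :: X) - route_wt (L ++ c :: d :: Y) =
  route_wt (L ++ v :: d :: X) - route_wt (L ++ v :: d :: Y).
Proof. by rewrite !route_wt_cat /=; ring. Qed.

Lemma route_wt_subB_right X Y r c Rr (v : T) :
  route_wt (X ++ r :: c :: Rr) - route_wt (Y ++ r :: c :: Rr) =
  route_wt (X ++ r :: v :: Rr) - route_wt (Y ++ r :: v :: Rr).
Proof.
have catr S (u : T) : S ++ r :: u :: Rr = (S ++ [:: r]) ++ u :: Rr by rewrite -catA.
by rewrite !catr !route_wt_cat !last_cat /=; ring.
Qed.

Section Avoiding.

Variables (I : pred T) (j : T) (m : nat).

Definition avoiding (s : seq T) : bool :=
  [&& uniq s, all (fun v => I v && (v != j)) s & size s == m].

Definition through (s : seq T) : bool :=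
  [&& uniq s, all I s, size s == m & j \in s].

Hypotheses (Ij : I j) (m_gt2 : (2 < m)%N)
  (through_const : forall s t, through s -> through t -> route_wt s = route_wt t).

Lemma through_subst L c Rr : avoiding (L ++ c :: Rr) -> through (L ++ j :: Rr).
Proof.
move=> /and3P [hu ha hs].
have jLR : j \notin L ++ Rr.
  apply: contraT; rewrite negbK mem_cat => jin.
  have := allP ha j; rewrite eqxx andbF; apply.
  by rewrite mem_cat inE; case/orP: jin => ->; rewrite ?orbT.
apply/and4P; split.
- rewrite -cat1s uniq_catCA /= jLR.
  by move: hu; rewrite -cat1s uniq_catCA => /andP [].
- move: ha; rewrite !all_cat /= Ij => /and3P [h1 _ h3].
  by rewrite (sub_all _ h1) ?(sub_all _ h3) // => v /andP [].
- by move: hs; rewrite !size_cat.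
- by rewrite mem_cat inE eqxx orbT.
Qed.

Lemma avoiding_perm s t : perm_eq s t -> avoiding s = avoiding t.
Proof. by move=> st; rewrite /avoiding (perm_uniq st) (perm_all _ st) (perm_size st). Qed.

Lemma route_wt_far L X Y Rr : (1 < size L)%N || (1 < size Rr)%N ->
  avoiding (L ++ X ++ Rr) -> avoiding (L ++ Y ++ Rr) ->
  route_wt (L ++ X ++ Rr) = route_wt (L ++ Y ++ Rr).
Proof.
move=> far hX hY; apply/eqP; rewrite -subr_eq0.
case/orP: far => [|farR].
  case/lastP: L hX hY => [|L d] //; case/lastP: L => [|L c] // hX hY _.
  move: hX hY; rewrite -!cats1 -!catA /= => hX hY.
  rewrite (route_wt_subB_left _ _ _ _ _ j) subr_eq0; apply/eqP/through_const.
    exact: through_subst hX.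
  exact: through_subst hY.
case: Rr farR hX hY => [|r [|c Rr]] // _; rewrite !catA => hX hY.
have catr S (u : T) : S ++ r :: u :: Rr = (S ++ [:: r]) ++ u :: Rr by rewrite -catA.
rewrite (route_wt_subB_right _ _ _ _ _ j) subr_eq0 !catr; apply/eqP/through_const.
  by apply: (@through_subst _ c); rewrite -catr.
by apply: (@through_subst _ c); rewrite -catr.
Qed.

Ltac avoiding_facts h := move: h; rewrite /avoiding /= !inE => h; split_facts.
Ltac through_tac hm := rewrite /through hm /= !inE ?eqxx ?orbT ?andbT; decide_facts.

(* Needed when [m = 3, 4], where a move may be adjacent to every other entry. *)
Lemma route_wt_replace3 a b c x : m = 3 ->
  avoiding [:: a; b; c] -> avoiding [:: a; x; c] ->
  route_wt [:: a; b; c] = route_wt [:: a; x; c].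
Proof.
move=> m3 hb hx; avoiding_facts hb; avoiding_facts hx.
have E s : through s -> route_wt s = route_wt [:: a; b; j].
  by move=> hs; apply: through_const => //; through_tac m3.
have e1 := E [:: a; x; j] ltac:(through_tac m3).
have e2 := E [:: b; c; j] ltac:(through_tac m3).
have e3 := E [:: b; j; a] ltac:(through_tac m3).
have e4 := E [:: x; c; j] ltac:(through_tac m3).
have e5 := E [:: x; j; a] ltac:(through_tac m3).
by move: e1 e2 e3 e4 e5; rewrite /route_wt /= => *; lra.
Qed.

Lemma route_wt_swap3l a b c : m = 3 ->
  avoiding [:: a; b; c] -> route_wt [:: a; b; c] = route_wt [:: b; a; c].
Proof.
move=> m3 h; avoiding_facts h.
have E s : through s -> route_wt s = route_wt [:: a; b; j].
  by move=> hs; apply: through_const => //; through_tac m3.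
have e1 := E [:: a; c; j] ltac:(through_tac m3).
have e2 := E [:: a; j; c] ltac:(through_tac m3).
have e3 := E [:: b; a; j] ltac:(through_tac m3).
have e4 := E [:: b; c; j] ltac:(through_tac m3).
have e5 := E [:: b; j; c] ltac:(through_tac m3).
by move: e1 e2 e3 e4 e5; rewrite /route_wt /= => *; lra.
Qed.

Lemma route_wt_swap3r a b c : m = 3 ->
  avoiding [:: a; b; c] -> route_wt [:: a; b; c] = route_wt [:: a; c; b].
Proof.
move=> m3 h; avoiding_facts h.
have E s : through s -> route_wt s = route_wt [:: a; b; j].
  by move=> hs; apply: through_const => //; through_tac m3.
have e1 := E [:: a; c; j] ltac:(through_tac m3).
have e2 := E [:: b; c; j] ltac:(through_tac m3).
have e3 := E [:: b; j; a] ltac:(through_tac m3).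
have e4 := E [:: c; b; j] ltac:(through_tac m3).
have e5 := E [:: c; j; a] ltac:(through_tac m3).
have e6 := E [:: j; a; b] ltac:(through_tac m3).
have e7 := E [:: j; a; c] ltac:(through_tac m3).
by move: e1 e2 e3 e4 e5 e6 e7; rewrite /route_wt /= => *; lra.
Qed.

Lemma route_wt_swap4 a b c d : m = 4 ->
  avoiding [:: a; b; c; d] -> route_wt [:: a; b; c; d] = route_wt [:: a; c; b; d].
Proof.
move=> m4 h; avoiding_facts h.
have E s : through s -> route_wt s = route_wt [:: a; b; c; j].
  by move=> hs; apply: through_const => //; through_tac m4.
have e1 := E [:: a; b; d; j] ltac:(through_tac m4).
have e2 := E [:: a; b; j; d] ltac:(through_tac m4).
have e3 := E [:: a; c; b; j] ltac:(through_tac m4).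
have e4 := E [:: a; c; d; j] ltac:(through_tac m4).
have e5 := E [:: a; c; j; d] ltac:(through_tac m4).
by move: e1 e2 e3 e4 e5; rewrite /route_wt /= => *; lra.
Qed.

Lemma avoiding_size s : avoiding s -> size s = m.
Proof. by case/and3P => _ _ /eqP. Qed.

Lemma route_wt_replace L a x Rr :
  avoiding (L ++ a :: Rr) -> avoiding (L ++ x :: Rr) ->
  route_wt (L ++ a :: Rr) = route_wt (L ++ x :: Rr).
Proof.
move=> ha hx; case: (boolP ((1 < size L) || (1 < size Rr))%N) => [far|].
  exact: (@route_wt_far L [:: a] [:: x]).
have := avoiding_size ha; rewrite size_cat /= negb_or -!leqNgt => sz /andP [hL hR].
have m3 : m = 3 by lia.
case: L hL ha hx sz => [|l [|? ?]] //= _; case: Rr hR => [|r [|? ?]] //= _ ha hx sz;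
  try by lia.
exact: route_wt_replace3.
Qed.

Lemma route_wt_swap L a b Rr : avoiding (L ++ a :: b :: Rr) ->
  route_wt (L ++ a :: b :: Rr) = route_wt (L ++ b :: a :: Rr).
Proof.
move=> hab; case: (boolP ((1 < size L) || (1 < size Rr))%N) => [far|].
  apply: (@route_wt_far L [:: a; b] [:: b; a]) => //.
  by rewrite -(avoiding_perm (perm_swap2 L a b Rr)).
have := avoiding_size hab; rewrite size_cat /= negb_or -!leqNgt => sz /andP [hL hR].
case: L hL hab sz => [|l [|? ?]] //= _; case: Rr hR => [|r [|? ?]] //= _ hab sz.
- by lia.
- exact: route_wt_swap3l.
- exact: route_wt_swap3r.
- exact: route_wt_swap4.
Qed.

Lemma route_wt_bubble M L Rr b : avoiding (L ++ M ++ b :: Rr) ->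
  route_wt (L ++ M ++ b :: Rr) = route_wt (L ++ b :: M ++ Rr).
Proof.
elim/last_ind: M L Rr => [|M c IH] L Rr // h.
have e : L ++ rcons M c ++ b :: Rr = (L ++ M) ++ c :: b :: Rr by rewrite -cats1 -!catA.
rewrite e route_wt_swap -?e // -catA IH ?cat_rcons //.
by rewrite catA -(avoiding_perm (perm_swap2 _ c b Rr)) -e.
Qed.

Lemma avoiding_replace L a b s t : b \notin s ->
  avoiding (L ++ a :: s) -> avoiding (L ++ b :: t) -> avoiding (L ++ b :: s).
Proof.
move=> bs /and3P [hu ha hsz] /and3P [hu' ha' hsz']; apply/and3P; split.
- rewrite -cat1s uniq_catCA /= mem_cat negb_or bs andbT.
  move: hu hu'; rewrite -[a :: s]cat1s -[b :: t]cat1s !(uniq_catCA L) /=.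
  by case/andP => _ ->; rewrite mem_cat negb_or => /andP [/andP [-> _] _].
- by move: ha ha'; rewrite !all_cat /= => /and3P [-> _ ->] /and3P [_ -> _].
- by move: hsz; rewrite !size_cat.
Qed.

Lemma route_wt_avoiding_const s t : avoiding s -> avoiding t -> route_wt s = route_wt t.
Proof.
suff gen L : avoiding (L ++ s) -> avoiding (L ++ t) -> route_wt (L ++ s) = route_wt (L ++ t).
  exact: (gen [::]).
have [k] := ubnP (size s); elim: k L s t => // k IH L [|a s] t ltk hs ht.
  have := avoiding_size hs; rewrite -(avoiding_size ht) !size_cat addn0 => /eqP.
  by rewrite -{1}[size L]addn0 eqn_add2l eq_sym size_eq0 => /eqP ->.
case: t ht => [|b t] ht.
  have := avoiding_size hs; rewrite -(avoiding_size ht) !size_cat /=; lia.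
have IHb s' : size s' = size s -> avoiding (L ++ b :: s') ->
    route_wt (L ++ b :: s') = route_wt (L ++ b :: t).
  by move=> sz hs'; rewrite -!cat_rcons; apply: IH; rewrite ?cat_rcons ?sz.
case: (eqVneq a b) => [eab|ab]; first by subst b; apply: IHb.
case: (boolP (b \in s)) => bs.
  case/splitPr: bs hs ltk IHb => M Rr hs ltk IHb.
  rewrite (route_wt_bubble (M := a :: M)) //; apply: IHb.
    by rewrite /= !size_cat addnS.
  rewrite (avoiding_perm (t := L ++ a :: M ++ b :: Rr)) // perm_cat2l.
  by rewrite -[b :: _]/([:: b] ++ _) perm_catCA.
have hb := avoiding_replace bs hs ht.
by rewrite (route_wt_replace hs hb); apply: IHb.
Qed.

End Avoiding.
End RouteWeight.

Section AffineDimension.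

Variables (R : realFieldType) (n : nat).
Local Notation N := #|{: Defs.arc n}|.
Local Notation vec := (vecA R n).

Definition dotA (lam : Defs.arc n -> R) (x : vec) : R := \sum_e lam e * x e.

Definition vrow (x : vec) : 'rV[R]_N := \row_i x (enum_val i).

Lemma vrowE x e : vrow x 0 (enum_rank e) = x e.
Proof. by rewrite mxE enum_rankK. Qed.

Lemma vrow_mulmx p x (C : 'M[R]_(N, p)) c :
  (vrow x *m C) 0 c = dotA (fun e => C (enum_rank e) c) x.
Proof.
rewrite mxE /dotA (reindex (@enum_rank _)); last exact/onW_bij/enum_rank_bij.
by apply: eq_bigr => e _; rewrite vrowE mulrC.
Qed.

Definition diffmx k (y : 'I_k.+1 -> vec) : 'M[R]_(k, N) :=
  \matrix_i (vrow (y (lift ord0 i)) - vrow (y ord0)).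

Lemma diffmx_sub k (y : 'I_k.+1 -> vec) i : (vrow (y i) - vrow (y ord0) <= diffmx y)%MS.
Proof.
case: (unliftP ord0 i) => [i'|] ->; last by rewrite subrr sub0mx.
by apply: (eq_row_sub i'); rewrite rowK.
Qed.

Lemma aff_indepP k (y : 'I_k.+1 -> vec) : reflect (aff_indep R n k y) (row_free (diffmx y)).
Proof.
apply: (iffP idP) => [free c csum comb | indep].
  pose v := \row_i c (lift ord0 i).
  have cl i : v 0 i = c (lift ord0 i) by rewrite mxE.
  have c0 : c ord0 = - \sum_i v 0 i.
    move: csum; rewrite big_ord_recl => /eqP; rewrite addr_eq0 => /eqP ->.
    by congr (- _); apply: eq_bigr => i _; rewrite cl.
  suff v0 : v = 0.
    move=> i; case: (unliftP ord0 i) => [i'|] ->; first by rewrite -cl v0 mxE.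
    by rewrite c0 v0 big1 ?oppr0 // => i' _; rewrite mxE.
  apply: (row_free_inj free); rewrite mul0mx; apply/rowP => e.
  rewrite !mxE -[RHS](comb (enum_val e)) big_ord_recl c0 mulNr mulr_suml -sumrN -big_split /=.
  by apply: eq_bigr => i _; rewrite !mxE; ring.
apply/inj_row_free => v vD.
pose c i := if unlift ord0 i is Some i' then v 0 i' else - \sum_i' v 0 i'.
have cl i : c (lift ord0 i) = v 0 i by rewrite /c liftK.
have csum : \sum_i c i = 0.
  by rewrite big_ord_recl; under eq_bigr do rewrite cl; rewrite /c unlift_none addNr.
apply/rowP => i; rewrite mxE -cl; apply: (indep c csum) => e.
have := congr1 (fun M : 'rV_N => M 0 (enum_rank e)) vD; rewrite !mxE => vDe.
rewrite -[RHS]vDe big_ord_recl /c unlift_none mulNr mulr_suml -sumrN -big_split /=.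
by apply: eq_bigr => i' _; rewrite liftK !mxE !enum_rankK; ring.
Qed.

Lemma not_aff_indep_submx k m (B : 'M[R]_(m, N)) (y : 'I_k.+2 -> vec) : (m <= k)%N ->
  (forall i, (vrow (y i) - vrow (y ord0) <= B)%MS) -> ~ aff_indep R n k.+1 y.
Proof.
move=> mk yB /aff_indepP/eqP rk.
have /mxrankS : (diffmx y <= B)%MS by apply/row_subP => i; rewrite rowK yB.
by rewrite rk => /leq_trans/(_ (leq_trans (rank_leq_row B) mk)); rewrite ltnn.
Qed.

Lemma aff_indep_size k (y : 'I_k.+1 -> vec) : aff_indep R n k y -> (k <= N)%N.
Proof. by move/aff_indepP/eqP <-; exact: rank_leq_col. Qed.

Lemma has_dim_exists (F : vec -> Prop) : (exists x, F x) -> exists k, has_dim R n F k.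
Proof.
move=> [x Fx].
pose PF k := exists y : 'I_k.+1 -> vec, (forall i, F (y i)) /\ aff_indep R n k y.
have PF0 : PF 0%N.
  by exists (fun=> x); split => //; apply/aff_indepP; rewrite /row_free -leqn0 rank_leq_row.
suff [k [PFk notPF]] : exists k, PF k /\ ~ PF k.+1.
  by exists k; split => // y Fy indep; apply: notPF; exists y.
apply: NNPP => nomax.
have PFall m : PF m by elim: m => // m IH; apply: NNPP => notPF; apply: nomax; exists m.
by have [y [_ /aff_indep_size]] := PFall N.+1; rewrite ltnn.
Qed.

Definition extend k (y : 'I_k.+1 -> vec) (w : vec) (i : 'I_k.+2) : vec :=
  if unlift ord_max i is Some i' then y i' else w.

Lemma extend_lift k (y : 'I_k.+1 -> vec) w i : extend y w (lift ord_max i) = y i.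
Proof. by rewrite /extend liftK. Qed.

Lemma extend_max k (y : 'I_k.+1 -> vec) w : extend y w ord_max = w.
Proof. by rewrite /extend unlift_none. Qed.

Lemma extend0 k (y : 'I_k.+1 -> vec) w : extend y w ord0 = y ord0.
Proof. by rewrite -(extend_lift y w ord0); congr extend; apply: val_inj. Qed.

Lemma diffmx_extend k (y : 'I_k.+1 -> vec) w : (diffmx y <= diffmx (extend y w))%MS.
Proof.
apply/row_subP => i; rewrite rowK.
by have := diffmx_sub (extend y w) (lift ord_max (lift ord0 i)); rewrite extend_lift extend0.
Qed.

Lemma vrow_mul_col (mu : Defs.arc n -> R) x :
  (vrow x *m \col_i mu (enum_val i)) 0 0 = dotA mu x.
Proof. by rewrite vrow_mulmx; apply: eq_bigr => e _; rewrite mxE enum_rankK. Qed.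

Lemma dotA_separates k (y : 'I_k.+1 -> vec) mu w :
  (forall i, dotA mu (y i) = 1) -> dotA mu w = 0 ->
  ~~ (vrow w - vrow (y ord0) <= diffmx y)%MS.
Proof.
move=> mu_y mu_w; apply/negP => /submxP [X wX].
pose cmu : 'cV[R]_N := \col_i mu (enum_val i).
have Dmu : diffmx y *m cmu = 0.
  apply/row_matrixP => i; rewrite row0 row_mul rowK; apply/rowP => j.
  by rewrite ord1 mulmxBl mxE [X in _ + X]mxE !vrow_mul_col !mu_y subrr mxE.
have := congr1 (fun M : 'rV_N => (M *m cmu) 0 0) wX.
rewrite /= mulmxBl mxE [X in _ + X]mxE !vrow_mul_col mu_w mu_y -mulmxA Dmu mulmx0 mxE.
by rewrite sub0r => /eqP; rewrite oppr_eq0 oner_eq0.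
Qed.

Lemma extend_row_free k (y : 'I_k.+1 -> vec) w :
  row_free (diffmx y) -> ~~ (vrow w - vrow (y ord0) <= diffmx y)%MS ->
  row_free (diffmx (extend y w)).
Proof.
move=> /eqP rk wy; set v := vrow w - vrow (y ord0).
have vext : (v <= diffmx (extend y w))%MS.
  by have := diffmx_sub (extend y w) ord_max; rewrite extend_max extend0.
have /rank_ltmx : (diffmx y < diffmx y + v)%MS.
  by rewrite ltmxE addsmxSl; apply: contra wy; apply: submx_trans (addsmxSr _ _).
have /mxrankS : (diffmx y + v <= diffmx (extend y w))%MS by rewrite addsmx_sub diffmx_extend.
rewrite /row_free rk => le lt; rewrite eqn_leq rank_leq_row.
exact: leq_trans lt le.
Qed.

Lemma extend_aff_indep k (y : 'I_k.+1 -> vec) w :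
  aff_indep R n k y -> ~~ (vrow w - vrow (y ord0) <= diffmx y)%MS ->
  aff_indep R n k.+1 (extend y w).
Proof. by move/aff_indepP => free wy; apply/aff_indepP/extend_row_free. Qed.

Lemma submx_cokerP m (B : 'M[R]_(m, N)) u v :
  reflect (forall c, dotA (fun e => cokermx B (enum_rank e) c) u =
                     dotA (fun e => cokermx B (enum_rank e) c) v)
          (vrow u - vrow v <= B)%MS.
Proof.
rewrite submxE mulmxBl subr_eq0; apply: (iffP eqP) => [uv c | uv].
  by rewrite -!vrow_mulmx uv.
by apply/rowP => c; rewrite !vrow_mulmx uv.
Qed.

Section Facet.

Variables (S : vec -> Prop) (phi : vec -> R) (mu : Defs.arc n -> R) (z : vec).
Hypotheses (phiE : forall x, phi x = dotA mu x) (Sz : S z) (phi_z : phi z = 0).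
(* [S] lies in the affine hull of the face [phi = 1] and [z]. *)
Hypothesis S_in_span : forall lam,
  (forall u, S u -> phi u = 1 -> dotA lam u = dotA lam z) ->
  forall x, S x -> dotA lam x = dotA lam z.

Lemma face_dim_succ k : has_dim R n (fun x => S x /\ phi x = 1) k -> has_dim R n S k.+1.
Proof.
case=> [[y [Fy indep]] maxF].
have z_out : ~~ (vrow z - vrow (y ord0) <= diffmx y)%MS.
  by apply: (dotA_separates (mu := mu)) => [i|]; rewrite -phiE ?(Fy i).2.
have face_sub u : S u -> phi u = 1 -> (vrow u - vrow (y ord0) <= diffmx y)%MS.
  move=> Su phiu; apply: contraT => uy; exfalso; apply: (maxF (extend y u)).
    by move=> i; rewrite /extend; case: unlift.
  exact: extend_aff_indep.
split.
  exists (extend y z); split; last exact: extend_aff_indep.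
  by move=> i; rewrite /extend; case: unlift => [i'|] //; case: (Fy i').
set B := diffmx (extend y z).
have zB : (vrow z - vrow (y ord0) <= B)%MS.
  by have := diffmx_sub (extend y z) ord_max; rewrite extend_max extend0.
have S_sub x : S x -> (vrow x - vrow (y ord0) <= B)%MS.
  move=> Sx; apply/submx_cokerP => c.
  set lam := fun e => cokermx B (enum_rank e) c.
  have lam_y0 u : (vrow u - vrow (y ord0) <= B)%MS -> dotA lam u = dotA lam (y ord0).
    by move=> /submx_cokerP; apply.
  rewrite (S_in_span (lam := lam) _ Sx) ?lam_y0 // => u Su phiu.
  by rewrite !lam_y0 // (submx_trans (face_sub u Su phiu)) ?diffmx_extend.
move=> y' Sy'; apply: (not_aff_indep_submx (B := B)) => // i.
have -> : vrow (y' i) - vrow (y' ord0) =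
    (vrow (y' i) - vrow (y ord0)) - (vrow (y' ord0) - vrow (y ord0)).
  by rewrite opprB addrA subrK.
by rewrite addmx_sub ?S_sub // -scaleN1r scalemx_sub ?S_sub.
Qed.

Theorem has_dim_face : (exists x, S x /\ phi x = 1) ->
  exists d, has_dim R n S d.+1 /\ has_dim R n (fun x => S x /\ phi x = 1) d.
Proof. by move=> /has_dim_exists [d hd]; exists d; split => //; exact: face_dim_succ. Qed.

End Facet.

End AffineDimension.

Section Paths.

Variables (R : realFieldType) (n : nat).
Local Notation node := 'I_n.+1.
Local Notation arc_path := (path (fun u v => is_arc n (u, v))).

Definition arcw (lam : Defs.arc n -> R) (u v : node) : R :=
  if insub (u, v) is Some e then lam e else 0.

Lemma dotA_indicator lam (Z : seq (node * node)) : uniq Z -> all (is_arc n) Z ->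
  \sum_(e : Defs.arc n) lam e * (if val e \in Z then 1 else 0) =
  \sum_(pr <- Z) arcw lam pr.1 pr.2.
Proof.
elim: Z => [|pr Z IH] /=.
  by move=> _ _; rewrite big_nil big1 // => e _; rewrite mulr0.
move=> /andP [prZ uZ] /andP [arc_pr arcsZ]; rewrite big_cons -IH //.
rewrite (eq_bigr (fun e : Defs.arc n => lam e * (val e == pr)%:R +
                    lam e * (if val e \in Z then 1 else 0))); last first.
  move=> e _; rewrite inE -[sval e]/(val e); case: eqP => [->|_] /=; last by rewrite mulr0 add0r.
  by rewrite (negbTE prZ) mulr0 addr0 mulr1.
rewrite big_split /= (bigD1 (Sub pr arc_pr)) //= eqxx mulr1 big1 ?addr0.
  by rewrite /arcw -surjective_pairing insubT.
move=> e ne; case: eqP => [epr|_]; last by rewrite mulr0.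
by move: ne; rewrite (_ : e = Sub pr arc_pr) ?eqxx //; apply: val_inj.
Qed.

Lemma dotA_incid lam x t : uniq (x :: t) -> arc_path x t ->
  dotA lam (incid R n (x :: t)) = walk_wt (arcw lam) x t.
Proof.
move=> uxt xt.
have -> : walk_wt (arcw lam) x t = \sum_(pr <- zip (x :: t) t) arcw lam pr.1 pr.2.
  by elim: t x {uxt xt} => [|y t IH] x /=; rewrite ?big_nil ?big_cons ?IH.
rewrite -dotA_indicator; first by apply: eq_bigr => e _; rewrite ffunE.
  exact: zip_uniql.
by elim: t x xt {uxt} => [|y t IH] x // /andP [xy /IH yt]; apply/andP.
Qed.

Definition out_ind (k : node) (e : Defs.arc n) : R := if (val e).1 == k then 1 else 0.

Lemma x_out_dotA (x : vecA R n) k : x_out R n x k = dotA (out_ind k) x.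
Proof.
rewrite /x_out /dotA big_mkcond /=; apply: eq_bigr => e _.
by rewrite /out_ind; case: ifP; rewrite ?mul1r ?mul0r.
Qed.

Lemma walk_wt_out_ind k x t : arc_path x t ->
  walk_wt (arcw (out_ind k)) x t = (count (pred1 k) (belast x t))%:R.
Proof.
elim: t x => [|y t IH] x //= /andP [xy yt].
by rewrite IH // /arcw insubT /out_ind /= natrD; case: (x == k).
Qed.

Definition internal (v : node) : bool := (v != ord0) && (v != ord_max).

Definition path_of (mid : seq node) : seq node := ord0 :: rcons mid ord_max.

Definition valid_mid p (mid : seq node) : bool :=
  [&& uniq mid, all internal mid & size mid == p.-1].

Lemma mem_path_of v mid : internal v -> (v \in path_of mid) = (v \in mid).
Proof. by case/andP => v0 vn; rewrite inE mem_rcons inE (negbTE v0) (negbTE vn). Qed.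

Variable p : nat.
Hypothesis p_gt1 : (1 < p)%N.

Lemma dotA_comb_paths lam (x : vecA R n) (l : seq (R * seq node)) :
  (forall e, x e = \sum_(c <- l) c.1 * incid R n c.2 e) ->
  dotA lam x = \sum_(c <- l) c.1 * dotA lam (incid R n c.2).
Proof.
move=> xl; rewrite /dotA; under eq_bigr do rewrite xl big_distrr.
rewrite exchange_big /=; apply: eq_bigr => c _; rewrite big_distrr /=.
by apply: eq_bigr => e _; rewrite mulrCA.
Qed.

Lemma in_Pp_dotA_le lam a (x : vecA R n) : in_Pp R n p x ->
  (forall s, is_pn_path n p s -> dotA lam (incid R n s) <= a) -> dotA lam x <= a.
Proof.
case=> l [l_ge0 l_sum1 l_paths xl] le_a; rewrite (dotA_comb_paths _ xl).
rewrite -[a]mul1r -l_sum1 big_distrl /= !big_seq ler_sum // => c cl.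
by rewrite ler_wpM2l ?(allP l_ge0 c cl) // le_a ?(allP l_paths c cl).
Qed.

Lemma in_Pp_dotA_eq lam a (x : vecA R n) : in_Pp R n p x ->
  (forall s, is_pn_path n p s -> dotA lam (incid R n s) = a) -> dotA lam x = a.
Proof.
case=> l [l_ge0 l_sum1 l_paths xl] eq_a; rewrite (dotA_comb_paths _ xl).
rewrite -[a]mul1r -l_sum1 big_distrl /= !big_seq; apply: eq_bigr => c cl.
by rewrite eq_a ?(allP l_paths c cl).
Qed.

Lemma path_in_Pp s : is_pn_path n p s -> in_Pp R n p (incid R n s).
Proof.
move=> ps; exists [:: (1, s)]; split => /=; rewrite ?ler01 ?ps //.
  by rewrite big_seq1.
by move=> e; rewrite big_seq1 mul1r.
Qed.

Lemma exists_valid_avoiding (j : node) : (0 < j)%N -> (j < n)%N -> (p <= n - 1)%N ->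
  exists2 mid, valid_mid p mid & j \notin mid.
Proof.
move=> j0 jn pn.
(* [g] enumerates the internal nodes other than [j]. *)
pose g i := if (i < j)%N then i else i.+1.
have gK i : i \in iota 1 p.-1 -> nat_of_ord (inord (g i) : node) = g i.
  by rewrite mem_iota => ip; rewrite inordK // /g; case: ifP; lia.
pose mid := [seq inord (g i) : node | i <- iota 1 p.-1].
have memP v : v \in mid -> exists2 i, (0 < i < p)%N & nat_of_ord v = g i.
  by case/mapP => i ip ->; exists i; rewrite ?gK //; move: ip; rewrite mem_iota; lia.
exists mid; last by apply/negP => /memP [i ip]; rewrite /g; case: ifP; lia.
apply/and3P; split; last by rewrite size_map size_iota.
  rewrite map_inj_in_uniq ?iota_uniq // => a b ap bp /(congr1 (@nat_of_ord _)).
  by rewrite !gK // /g; case: ifP; case: ifP; lia.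
apply/allP => v /memP [i ip vi]; rewrite /internal -!val_eqE /= vi /g.
by case: ifP; lia.
Qed.

Lemma valid_mid_through (j : node) mid : internal j -> j \notin mid ->
  valid_mid p mid -> valid_mid p (j :: behead mid).
Proof.
move=> Ij jmid /and3P [umid int_mid sz].
case: mid jmid umid int_mid sz => [|v mid]; first by move=> _ _ _ /eqP /= sz; exfalso; lia.
rewrite /valid_mid /= Ij !inE negb_or => /andP [_ ->] /andP [_ ->] /andP [_ ->].
by rewrite andbT.
Qed.

Hypothesis n_gt0 : (0 < n)%N.

Lemma ord0_neq_max : (ord0 : node) != ord_max.
Proof. by apply/eqP => /(congr1 val) /= n0; move: n_gt0; rewrite -n0. Qed.

Lemma arc_path_of x mid : uniq (x :: rcons mid ord_max) -> x != ord_max ->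
  all internal mid -> (x != ord0) || (mid != [::]) -> arc_path x (rcons mid ord_max).
Proof.
elim: mid x => [|y mid IH] x /=.
  rewrite !inE andbT orbF => xn _ _ x0; rewrite /is_arc /= xn andbT.
  by rewrite eq_sym ord0_neq_max /=; apply: contra x0; case/eqP => ->.
move=> /andP [xmid umid] xn /andP [/andP [y0 yn] int_mid] _; apply/andP; split.
  rewrite /is_arc /= y0 xn /=; apply/andP; split.
    by apply: contra xmid => /eqP ->; rewrite inE eqxx.
  by apply: contra yn => /eqP [_ ->].
by apply: IH => //; rewrite y0.
Qed.

Lemma is_pn_path_of mid : valid_mid p mid -> is_pn_path n p (path_of mid).
Proof.
case/and3P => umid int_mid /eqP sz.
have ord0_mid : ord0 \notin mid by apply/negP => /(allP int_mid); rewrite /internal eqxx.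
have max_mid : ord_max \notin mid.
  by apply/negP => /(allP int_mid); rewrite /internal eqxx andbF.
have u_path : uniq (path_of mid).
  by rewrite /= mem_rcons inE negb_or ord0_neq_max ord0_mid rcons_uniq max_mid umid.
apply/and5P; split => //.
- by rewrite /path_of /= size_rcons sz prednK ?(ltnW p_gt1).
- by rewrite /path_of /= last_rcons.
- apply: arc_path_of => //; first exact: ord0_neq_max.
  by rewrite eqxx /= -size_eq0 sz; lia.
Qed.

Lemma pn_path_ofP s : is_pn_path n p s -> exists2 mid, s = path_of mid & valid_mid p mid.
Proof.
case/and5P => sz /eqP s0 /eqP sn us _.
case: s sz s0 sn us => [|x t] //= sz -> {x}.
case/lastP: t sz => [|mid y] sz; first by move/eqP; rewrite (negbTE ord0_neq_max).
rewrite last_rcons => -> /andP [out0 umid]; exists mid => //.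
move: umid; rewrite rcons_uniq => /andP [outn umid]; apply/and3P; split => //.
  apply/allP => v vmid; apply/andP; split.
    by apply: contra out0 => /eqP <-; rewrite mem_rcons inE vmid orbT.
  by apply: contra outn => /eqP <-.
by move: sz; rewrite size_rcons => /eqP [<-].
Qed.

Lemma dotA_path_of lam mid : valid_mid p mid ->
  dotA lam (incid R n (path_of mid)) = route_wt (arcw lam) ord0 ord_max mid.
Proof. by case/is_pn_path_of/and5P => _ _ _; exact: dotA_incid. Qed.

Lemma x_out_path (j : node) s : internal j -> is_pn_path n p s ->
  x_out R n (incid R n s) j = (j \in s)%:R.
Proof.
move=> Ij /pn_path_ofP [mid -> vmid].
have /and5P [_ _ _ _ pth] := is_pn_path_of vmid.
rewrite x_out_dotA dotA_path_of // /route_wt walk_wt_out_ind // belast_rcons mem_path_of //=.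
case/andP: Ij => j0 _; rewrite eq_sym (negbTE j0) count_uniq_mem //.
by case/and3P: vmid.
Qed.

Lemma dotA_avoiding_const (j : node) lam : internal j -> (3 < p)%N ->
  (forall s t, is_pn_path n p s -> is_pn_path n p t -> j \in s -> j \in t ->
     dotA lam (incid R n s) = dotA lam (incid R n t)) ->
  forall s t, is_pn_path n p s -> is_pn_path n p t -> j \notin s -> j \notin t ->
     dotA lam (incid R n s) = dotA lam (incid R n t).
Proof.
move=> Ij p_gt3 through_const s t /pn_path_ofP [ms -> vs] /pn_path_ofP [mt -> vt].
have avoid mid : valid_mid p mid -> j \notin path_of mid -> avoiding internal j p.-1 mid.
  case/and3P => umid int_mid sz; rewrite mem_path_of // => jmid; apply/and3P; split => //.
  by apply/allP => v vmid; rewrite (allP int_mid) //; apply: contra jmid => /eqP <-.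
move=> /(avoid _ vs) ams /(avoid _ vt) amt; rewrite !dotA_path_of //.
apply: (route_wt_avoiding_const Ij _ _ ams amt); first by lia.
move=> u v /and4P [uu int_u su ju] /and4P [uv int_v sv jv].
have vu : valid_mid p u by apply/and3P.
have vv : valid_mid p v by apply/and3P.
rewrite -!dotA_path_of //; apply: through_const; rewrite ?is_pn_path_of ?mem_path_of //.
Qed.

Lemma x_out_le1 (j : node) x : internal j -> in_Pp R n p x -> x_out R n x j <= 1.
Proof.
move=> Ij /in_Pp_dotA_le; rewrite x_out_dotA; apply => s ps.
by rewrite -x_out_dotA x_out_path //; case: (j \in s); rewrite ?ler01.
Qed.

Lemma in_Pp_face_span (j : node) z lam : internal j -> (3 < p)%N ->
  is_pn_path n p z -> j \notin z ->
  (forall u, in_Pp R n p u -> x_out R n u j = 1 -> dotA lam u = dotA lam (incid R n z)) ->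
  forall x, in_Pp R n p x -> dotA lam x = dotA lam (incid R n z).
Proof.
move=> Ij p_gt3 pz jz face_eq x /in_Pp_dotA_eq; apply => s ps.
have on_face u : is_pn_path n p u -> j \in u -> dotA lam (incid R n u) = dotA lam (incid R n z).
  by move=> pu ju; apply: face_eq; [exact: path_in_Pp | rewrite x_out_path ?ju].
case: (boolP (j \in s)) => js; first exact: on_face.
apply: (dotA_avoiding_const Ij) => // u v pu pv ju jv.
by rewrite !on_face.
Qed.

End Paths.

Theorem theorem11 (R : realFieldType) (n p : nat) (j : 'I_n.+1) :
  (4 <= p)%N -> (p <= n - 1)%N -> (0 < j)%N -> (j < n)%N ->
  (forall x : vecA R n, in_Pp R n p x -> x_out R n x j <= 1) /\
  (exists d : nat,
     has_dim R n (fun x : vecA R n => in_Pp R n p x) d.+1 /\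
     has_dim R n (fun x : vecA R n => in_Pp R n p x /\ x_out R n x j = 1) d).
Proof.
move=> p4 pn j0 jn.
have n0 : (0 < n)%N by lia.
have p1 : (1 < p)%N by lia.
have Ij : internal j by rewrite /internal -!val_eqE /=; lia.
split => [x|]; first exact: x_out_le1.
have [mz vz jz] := exists_valid_avoiding p1 j0 jn pn.
have pz := is_pn_path_of p1 n0 vz.
have pj := is_pn_path_of p1 n0 (valid_mid_through p1 Ij jz vz).
apply: (has_dim_face (mu := out_ind R j) (z := incid R n (path_of mz))).
- by move=> x; exact: x_out_dotA.
- exact: path_in_Pp.
- by rewrite (x_out_path R p1 n0 Ij pz) mem_path_of // (negbTE jz).
- by move=> lam; apply: in_Pp_face_span; rewrite ?mem_path_of.
- exists (incid R n (path_of (j :: behead mz))); split; first exact: path_in_Pp.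
  by rewrite (x_out_path R p1 n0 Ij pj) mem_path_of // mem_head.
Qed.
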